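(* Let $V,s,c$ satisfy conditions (V), (S), (C) below, let $\mu_0\in\mathcal{M}^+(\mathbb{R}^d)$ with $\operatorname{supp}\mu_0\subseteq B(0,R_0)$, let $R$ be the radius in (S2), and set $\tilde R=\max\{R,R_0\}$. Let $\mu^N_t$ be the lattice approximate solution defined below. Then for all $N$ large enough, all $l=0,\dots,M$ and all $\tau\in[0,\Delta_N]$, $$\operatorname{supp}(\mu^N_{t_l+\tau})\subseteq B\bigl(0,e^{C_ST}(\tilde R+2)-1\bigr).$$ In particular, these measures are supported in a compact set independent of $N$, $l$ and $\tau$.
   Context: $\mathcal{M}^+(\mathbb{R}^k)$: finite nonnegative Borel measures; $\|f\|_{BL}=\max(\sup|f|,\operatorname{Lip}f)$, $\|\mu\|_{BL^*}=\sup\{\int\psi\,d\mu:\|\psi\|_{BL}\le1\}$. Conditions: (V) $V:\mathcal{M}^+(\mathbb{R}^d)\to\mathcal{M}^+(\mathbb{R}^d\times\mathbb{R}^d)$, $\pi_1^{\#}V[\mu]=\mu$; (V1) $\sup_{(x,v)\in\operatorname{supp}V[\mu]}|v|\le C_S(1+\sup_{(x,v)\in\operatorname{supp}V[\mu]}|x|)$; (V2) for each $R'>0$, $\|V[\mu]-V[\nu]\|_{BL^*}\le C_F(R')\|\mu-\nu\|_{BL^*}$ for $\mu,\nu$ supported in $B(0,R')$. (S) $s:\mathcal{M}^+(\mathbb{R}^d)\to\mathcal{M}^+(\mathbb{R}^d)$, (S1) $\|s[\mu]-s[\nu]\|_{BL^*}\le L\|\mu-\nu\|_{BL^*}$, (S2)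 $\operatorname{supp}s[\mu]\subseteq B(0,R)$ for all $\mu$. (C) $c:\mathbb{R}^d\times\mathcal{M}^+(\mathbb{R}^d)\to\mathbb{R}$, (C1) $|c|\le C_b$, (C2) $|c(x,\mu)-c(y,\nu)|\le C_L(|x-y|+\|\mu-\nu\|_{BL^*})$. Lattice scheme: fix $T>0$; for $N\in\mathbb{N}$, $\Delta_N=1/N$; $x_1,\dots,x_I$ enumerate $(N^{-2}\mathbb{Z}^d)\cap[-N,N]^d$, $v_1,\dots,v_J$ enumerate $(N^{-1}\mathbb{Z}^d)\cap[-N,N]^d$; $Q_i=x_i+[0,\Delta_N^2)^d$, $Q'_j=v_j+[0,\Delta_N)^d$; $m_i^x(\mu)=\mu(Q_i)$, $m_{ij}^v(W)=W(Q_i\times Q'_j)$. Time points $t_l=l/N$, $l=0,\dots,M$, with $M$ such that $[0,T]$ is covered by $[t_l,t_{l+1})$, $l<M$, and $[t_M,t_{M+1}]$, $t_{M+1}=T$, each of length at most $\Delta_N$. Set $\mu^N_0=\sum_i m_i^x(\mu_0)\delta_{x_i}$ and recursively, for $\tau\in[0,\Delta_N]$, $$\mu^N_{t_l+\tau}=\tau\sum_{i=1}^I m_i^x(s[\mu^N_{t_l}])\delta_{x_i}+\sum_{i=1}^I\sum_{j=1}^J m_{ij}^v(V[\mu^N_{t_l}])\,e^{c(x_i,\mu^N_{t_l})\tau}\,\delta_{x_i+\tau v_j}.$$ *)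

From HB Require Import structures.
From mathcomp Require Import all_boot all_order all_algebra.
From mathcomp Require Import all_classical all_reals all_analysis.
Set Implicit Arguments. Unset Strict Implicit. Unset Printing Implicit Defensive.
Import Order.TTheory GRing.Theory Num.Theory.
Local Open Scope classical_set_scope.
Local Open Scope ring_scope.

Definition Rd (R : realType) (d : nat) := 'rV[R]_d.
HB.instance Definition _ (R : realType) d := Choice.on (Rd R d).
HB.instance Definition _ (R : realType) d := isPointed.Build (Rd R d) (0%R : 'rV[R]_d).

Section Defs.
Variable R : realType.

Definition enorm (d : nat) (x : 'rV[R]_d) : R := Num.sqrt (\sum_(i < d) x ord0 i ^+ 2).

Definition eopen (d : nat) (A : set (Rd R d)) : Prop :=
  forall x, A x -> exists2 r : R, 0 < r & [set y | enorm ((y : 'rV[R]_d) - x) < r] `<=` A.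

Local Notation pt d := (g_sigma_algebraType (@eopen d)).

Definition vec (d : nat) (x : pt d) : 'rV[R]_d := x.
Definition ofvec (d : nat) (x : 'rV[R]_d) : pt d := x.

Definition dist1 (d : nat) (x y : pt d) : R := enorm (vec x - vec y).
Definition dist2 (d : nat) (p q : pt d * pt d) : R :=
  Num.sqrt (dist1 p.1 q.1 ^+ 2 + dist1 p.2 q.2 ^+ 2).

Definition Meas (d : nat) := {finite_measure set (pt d) -> \bar R}.
Definition Meas2 (d : nat) := {finite_measure set (pt d * pt d)%type -> \bar R}.

Definition supp (T : Type) (dist : T -> T -> R) (m : set T -> \bar R) : set T :=
  [set x | forall r : R, 0 < r -> (0 < m [set y | (dist x y < r)%R])%E].

Definition eball0 (d : nat) (r : R) : set (pt d) := [set x | enorm (vec x) < r].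

Definition BL1 (T : Type) (dist : T -> T -> R) (psi : T -> R) : Prop :=
  (forall x, `|psi x| <= 1) /\ (forall x y, `|psi x - psi y| <= dist x y).

Definition blnorm (dd : measure_display) (T : measurableType dd)
  (dist : T -> T -> R) (mu nu : set T -> \bar R) : \bar R :=
  ereal_sup [set (\int[mu]_x (psi x)%:E - \int[nu]_x (psi x)%:E)%E
            | psi in [set psi | BL1 dist psi]].

Definition bl1 (d : nat) (mu nu : Meas d) : \bar R := blnorm (@dist1 d) mu nu.
Definition bl2 (d : nat) (mu nu : Meas2 d) : \bar R := blnorm (@dist2 d) mu nu.

Definition condV (d : nat) (V : Meas d -> Meas2 d) (C_S : R) (C_F : R -> R) : Prop :=
  [/\ (forall mu (A : set (pt d)), measurable A -> V mu (A `*` setT) = mu A),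
      (forall mu, (ereal_sup [set (enorm (vec p.2))%:E | p in supp (@dist2 d) (V mu)]
                  <= C_S%:E * (1 + ereal_sup [set (enorm (vec p.1))%:E
                                             | p in supp (@dist2 d) (V mu)]))%E) &
      (forall R' : R, 0 < R' -> forall mu nu : Meas d,
         supp (@dist1 d) mu `<=` @eball0 d R' -> supp (@dist1 d) nu `<=` @eball0 d R' ->
         (bl2 (V mu) (V nu) <= (C_F R')%:E * bl1 mu nu)%E)].

Definition condS (d : nat) (s : Meas d -> Meas d) (L Rs : R) : Prop :=
  (forall mu nu : Meas d, (bl1 (s mu) (s nu) <= L%:E * bl1 mu nu)%E) /\
  (forall mu : Meas d, supp (@dist1 d) (s mu) `<=` @eball0 d Rs).

Definition condC (d : nat) (c : pt d -> Meas d -> R) (C_b C_L : R) : Prop :=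
  (forall x mu, `|c x mu| <= C_b) /\
  (forall x y mu nu, (`|c x mu - c y nu|%:E
                      <= C_L%:E * ((dist1 x y)%:E + bl1 mu nu))%E).

(** Lattice. Spatial nodes x_k = k / N^2 with k in Z^d, |k_j| <= N^3, i.e.
    (N^{-2} Z^d) cap [-N,N]^d; index k_j + N^3 in 'I_(2 N^3 + 1). *)
Definition xidx (N d : nat) := {ffun 'I_d -> 'I_(2 * N ^ 3 + 1)}.
Definition vidx (N d : nat) := {ffun 'I_d -> 'I_(2 * N ^ 2 + 1)}.

Definition xnode (N d : nat) (k : xidx N d) : 'rV[R]_d :=
  \row_j (((k j : nat)%:Z - (N ^ 3)%:Z)%:~R / (N%:R ^+ 2)).
Definition vnode (N d : nat) (k : vidx N d) : 'rV[R]_d :=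
  \row_j (((k j : nat)%:Z - (N ^ 2)%:Z)%:~R / N%:R).

Definition cube (d : nat) (a : 'rV[R]_d) (h : R) : set (pt d) :=
  [set y | forall j, a ord0 j <= vec y ord0 j < a ord0 j + h].
Definition Qx (N d : nat) (k : xidx N d) : set (pt d) := cube (xnode k) (N%:R ^+ 2)^-1.
Definition Qv (N d : nat) (k : vidx N d) : set (pt d) := cube (vnode k) (N%:R)^-1.

Definition discretize (N d : nat) (mu : Meas d) (A : set (pt d)) : \bar R :=
  (\sum_(i : xidx N d) mu (Qx i) * \d_(ofvec (xnode i)) A)%E.

(** One step of the scheme from mu = mu^N_{t_l}, evaluated at time t_l + tau. *)
Definition lattice_step (N d : nat) (V : Meas d -> Meas2 d) (s : Meas d -> Meas d)
  (c : pt d -> Meas d -> R) (mu : Meas d) (tau : R) (A : set (pt d)) : \bar R :=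
  (tau%:E * (\sum_(i : xidx N d) s mu (Qx i) * \d_(ofvec (xnode i)) A)
   + \sum_(i : xidx N d) \sum_(j : vidx N d)
       V mu (Qx i `*` Qv j) * (expR (c (ofvec (xnode i)) mu * tau))%:E
       * \d_(ofvec (xnode i + tau *: vnode j)) A)%E.

(** Number of full steps: M = floor(T N), so that t_M <= T < t_M + 1/N. *)
Definition Msteps (T : R) (N : nat) : nat := `|Num.floor (T * N%:R)|%N.

End Defs.

Notation pt R d := (g_sigma_algebraType (@eopen R d)).

(* The new atoms of one step are lattice nodes x_i of cells charged by s[mu],
   within D/N^2 (D = d+1) of supp s[mu], which lies in B(0,R), and points
   x_i + tau v_j of cells charged by V[mu].  A charged cell meets the support
   (R^d is second countable) and by (V1) velocities on supp V[mu] are at most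
   C_S (1 + r) when supp mu lies in the closed ball of radius r.  One step thus
   sends r to at most max (R + D/N^2) (r + C_S (1 + r)/N + 2 D/N^2); after at
   most T N + 1 steps 1 + r <= (1 + max R R0 + O(1/N)) (1 + C_S/N)^(TN+1), which
   is below e^(C_S T) (max R R0 + 2) for N large.  Balls of negative radius are
   empty, which is why inclusions between them only compare nonnegative radii. *)

From HB Require Import structures.
From mathcomp Require Import all_boot all_order all_algebra.
From mathcomp Require Import all_classical all_reals all_analysis.
From mathcomp Require Import ring lra.
Import Order.TTheory GRing.Theory Num.Theory.
Local Open Scope classical_set_scope.
Local Open Scope ring_scope.
Set Implicit Arguments. Unset Strict Implicit. Unset Printing Implicit Defensive.

Section EuclideanNorm.
Variables (R : realType) (d : nat).
Implicit Types (x y : 'rV[R]_d) (e t : R).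

Definition dotr x y := \sum_(i < d) x ord0 i * y ord0 i.

Lemma enorm_ge0 x : 0 <= enorm x.
Proof. exact: sqrtr_ge0. Qed.

Lemma enorm_sqr x : enorm x ^+ 2 = dotr x x.
Proof.
rewrite sqr_sqrtr; last by apply: sumr_ge0 => i _; exact: sqr_ge0.
by apply: eq_bigr => i _; rewrite expr2.
Qed.

Lemma coord_le_enorm x j : `|x ord0 j| <= enorm x.
Proof.
rewrite -sqrtr_sqr ler_sqrt; last by apply: sumr_ge0 => i _; exact: sqr_ge0.
by rewrite (bigD1 j) //= lerDl sumr_ge0 // => i _; rewrite sqr_ge0.
Qed.

Lemma dotr_le_enorm x y : dotr x y <= enorm x * enorm y.
Proof.
set a := enorm x; set b := enorm y.
have [ab0|ab_neq0] := eqVneq (a * b) 0.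
  have coord0 (z : 'rV[R]_d) j : enorm z = 0 -> z ord0 j = 0.
    by move=> z0; apply/eqP; rewrite -normr_le0 -z0 coord_le_enorm.
  have /orP[/eqP a0|/eqP b0] : (a == 0) || (b == 0) by rewrite -mulf_eq0 ab0.
  - by rewrite ab0 /dotr big1 // => i _; rewrite coord0 ?mul0r.
  - by rewrite ab0 /dotr big1 // => i _; rewrite (coord0 y) ?mulr0.
have ab_gt0 : 0 < a * b by rewrite lt_def ab_neq0 mulr_ge0 ?enorm_ge0.
have expand : \sum_(i < d) (b * x ord0 i - a * y ord0 i) ^+ 2
              = 2 * (a * b) * (a * b - dotr x y).
  transitivity (b ^+ 2 * dotr x x - 2 * (a * b) * dotr x y + a ^+ 2 * dotr y y).
    by rewrite /dotr !mulr_sumr -sumrB -big_split; apply: eq_bigr => i _ /=; ring.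
  by rewrite -!enorm_sqr -/a -/b; ring.
have : 0 <= 2 * (a * b) * (a * b - dotr x y).
  by rewrite -expand sumr_ge0 // => i _; rewrite sqr_ge0.
by rewrite pmulr_rge0 ?subr_ge0 // mulr_gt0.
Qed.

Lemma enormD x y : enorm (x + y) <= enorm x + enorm y.
Proof.
rewrite -(@ler_pXn2r _ 2) ?nnegrE ?addr_ge0 ?enorm_ge0 // sqrrD !enorm_sqr.
have -> : dotr (x + y) (x + y) = dotr x x + 2 * dotr x y + dotr y y.
  by rewrite /dotr mulr_sumr -!big_split; apply: eq_bigr => i _ /=; rewrite !mxE; ring.
have := dotr_le_enorm x y; rewrite mulr2n; lra.
Qed.

Lemma enormN x : enorm (- x) = enorm x.
Proof. by congr Num.sqrt; apply: eq_bigr => i _; rewrite mxE sqrrN. Qed.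

Lemma enormZ t x : enorm (t *: x) = `|t| * enorm x.
Proof.
rewrite -sqrtr_sqr -sqrtrM ?sqr_ge0 //; congr Num.sqrt.
by rewrite mulr_sumr; apply: eq_bigr => i _; rewrite mxE exprMn.
Qed.

Lemma enorm_le_coordwise x y :
  (forall j, `|x ord0 j| <= `|y ord0 j|) -> enorm x <= enorm y.
Proof.
move=> le_xy; rewrite ler_sqrt; last by apply: sumr_ge0 => i _; exact: sqr_ge0.
apply: ler_sum => j _; rewrite -real_normK ?num_real // -[leRHS]real_normK ?num_real //.
by rewrite (@ler_pXn2r _ 2) ?nnegrE.
Qed.

Lemma enorm_le_addB x y : enorm x <= enorm y + enorm (x - y).
Proof. by have := enormD y (x - y); rewrite addrC subrK. Qed.

Lemma enorm_lt_box x e : 0 < e -> (forall j, `|x ord0 j| < e) -> enorm x < d.+1%:R * e.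
Proof.
move=> e_gt0 hx; rewrite -(@ltr_pXn2r _ 2) ?nnegrE ?enorm_ge0 ?mulr_ge0 ?ltW //.
rewrite enorm_sqr; apply: (@le_lt_trans _ _ (\sum_(i < d) e ^+ 2)).
  apply: ler_sum => i _; rewrite -expr2 -real_normK ?num_real //.
  by rewrite (@ler_pXn2r _ 2) ?nnegrE ?(ltW e_gt0) //; apply/ltW.
have -> : \sum_(i < d) e ^+ 2 = d%:R * e ^+ 2 by rewrite sumr_const card_ord mulr_natl.
rewrite exprMn ltr_pM2r ?exprn_gt0 // -natrX ltr_nat.
by rewrite (leq_trans (ltnSn d)) // expnS expn1 leq_pmulr.
Qed.

Lemma rat_row_approx x e : 0 < e -> exists a : 'rV[rat]_d, enorm (map_mx ratr a - x) < e.
Proof.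
move=> e_gt0; pose e' := e / d.+1%:R.
have e'_gt0 : 0 < e' by rewrite divr_gt0.
have /choice [q hq] : forall j : 'I_d, exists q : rat, x ord0 j - e' < ratr q < x ord0 j + e'.
  move=> j; have /rat_in_itvoo[q] : x ord0 j - e' < x ord0 j + e' by lra.
  by rewrite in_itv /=; exists q.
exists (\row_j q j); rewrite (_ : e = d.+1%:R * e'); last by rewrite mulrC divfK ?pnatr_eq0.
apply: enorm_lt_box => // j; rewrite !mxE ltr_norml; have := hq j; lra.
Qed.

End EuclideanNorm.

Section SupportCountableBase.
Variables (R : realType) (dd : measure_display) (T : measurableType dd).
Variables (dist : T -> T -> R) (base : nat -> set T).
Hypothesis dist_triangle : forall x y z, dist x z <= dist x y + dist y z.
Hypothesis measurable_base : forall n, measurable (base n).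
Hypothesis base_dense : forall x r, 0 < r ->
  exists n, base n x /\ base n `<=` [set y | dist x y < r].

Lemma measurable_ball x r : measurable [set y | dist x y < r].
Proof.
rewrite (_ : [set y | _] = \bigcup_(n in [set n | base n `<=` [set y | dist x y < r]]) base n).
  exact: bigcup_measurable.
apply/seteqP; split=> [y xy|y [n /= sub /sub] //].
have [|n [ny sub]] := base_dense y (r := r - dist x y); first by rewrite subr_gt0.
exists n => // z /sub /= yz; have := dist_triangle x y z; lra.
Qed.

Lemma negligible_setC_supp (m : {measure set T -> \bar R}) :
  m.-negligible (~` supp dist m).
Proof.
pose null n := base n `&` [set _ | m (base n) = 0%E].
apply: (@negligibleS _ _ _ _ (\bigcup_n null n)); last first.
  apply: negligible_bigcup => n; have [m0|m0] := pselect (m (base n) = 0%E).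
    by exists (base n); split => // y [].
  by exists set0; split => // y [_ /m0].
move=> x /existsNP[r /not_implyP[r_gt0 /negP]]; rewrite -leNgt => ball0.
have [n [nx sub]] := base_dense x r_gt0; exists n => //; split => //=.
apply: subset_measure0 sub _ => //; first exact: measurable_ball.
by apply/eqP; rewrite eq_le ball0 measure_ge0.
Qed.

Lemma supp_meets (m : {measure set T -> \bar R}) C :
  measurable C -> (0 < m C)%E -> exists2 x, C x & supp dist m x.
Proof.
move=> mC m_gt0; apply: contrapT => noC.
suff mC0 : m C = 0%E by rewrite mC0 ltxx in m_gt0.
apply/negligibleP => //; apply: negligibleS (negligible_setC_supp m).
by move=> x Cx suppx; apply: noC; exists x.
Qed.

End SupportCountableBase.

Section EuclideanSupport.
Variables (R : realType) (d : nat).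
Local Notation P := (pt R d).
Local Notation P2 := (P * P)%type.
Implicit Types (x y z : P) (p q : P2).

Lemma dist1C x y : dist1 x y = dist1 y x.
Proof. by rewrite /dist1 -enormN opprB. Qed.

Lemma dist1_triangle x y z : dist1 x z <= dist1 x y + dist1 y z.
Proof.
rewrite /dist1 (_ : vec x - vec z = (vec x - vec y) + (vec y - vec z)) ?enormD //.
by rewrite addrA subrK.
Qed.

Lemma measurable_eopen (A : set P) : eopen A -> measurable A.
Proof. exact: sub_sigma_algebra. Qed.

Lemma eopen_ball1 x r : eopen [set y : P | dist1 x y < r].
Proof.
move=> y /= xy; exists (r - dist1 x y); first by rewrite subr_gt0.
move=> z /= yz; have := dist1_triangle x y z.
by rewrite (dist1C y z) /dist1 /vec in yz *; lra.
Qed.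

Definition rat_ball n : set P :=
  if @unpickle ('rV[rat]_d * rat)%type n is Some (a, q)
  then [set y | dist1 (ofvec (map_mx ratr a)) y < ratr q] else set0.

Lemma measurable_rat_ball n : measurable (rat_ball n).
Proof.
rewrite /rat_ball; case: unpickle => [[a q]|]; last exact: measurable0.
by apply: measurable_eopen; exact: eopen_ball1.
Qed.

Lemma rat_ball_dense x r : 0 < r ->
  exists n, rat_ball n x /\ rat_ball n `<=` [set y | dist1 x y < r].
Proof.
move=> r_gt0; have [a ax] := rat_row_approx (vec x) (divr_gt0 r_gt0 (ltr0n _ 4)).
have /rat_in_itvoo[q] : r / 4 < r / 2 by lra.
rewrite in_itv /= => /andP[q_gt q_lt].
set c : P := ofvec (map_mx ratr a); have cx : dist1 c x < r / 4 := ax.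
exists (pickle (a, q)); rewrite /rat_ball pickleK -/c; split => [/=|y /= cy]; first lra.
by have := dist1_triangle x c y; rewrite (dist1C x c); lra.
Qed.

Lemma supp1_meets (m : Meas R d) C :
  measurable C -> (0 < m C)%E -> exists2 x, C x & supp (@dist1 R d) m x.
Proof. exact: (supp_meets dist1_triangle measurable_rat_ball rat_ball_dense). Qed.

Lemma measurable_ball1 x r : measurable [set y | dist1 x y < r].
Proof. exact: (measurable_ball dist1_triangle measurable_rat_ball rat_ball_dense). Qed.

Definition dist_pair p q : 'rV[R]_2 := \row_(i < 2) [:: dist1 p.1 q.1; dist1 p.2 q.2]`_i.

Lemma dist2E p q : dist2 p q = enorm (dist_pair p q).
Proof. by rewrite /enorm !big_ord_recr big_ord0 /= !mxE add0r. Qed.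

Lemma dist1_le_dist2 p q : dist1 p.1 q.1 <= dist2 p q.
Proof.
rewrite dist2E; have := coord_le_enorm (dist_pair p q) ord0.
by rewrite mxE /= ger0_norm // enorm_ge0.
Qed.

Lemma dist2_le p q : dist2 p q <= dist1 p.1 q.1 + dist1 p.2 q.2.
Proof.
have a0 := enorm_ge0 (vec p.1 - vec q.1); have b0 := enorm_ge0 (vec p.2 - vec q.2).
rewrite /dist2 -(@ler_pXn2r _ 2) ?nnegrE ?sqrtr_ge0 ?addr_ge0 //.
rewrite sqr_sqrtr ?addr_ge0 ?sqr_ge0 // sqrrD lerD2r lerDl mulrn_wge0 //.
exact: mulr_ge0.
Qed.

Lemma dist2_triangle p q u : dist2 p u <= dist2 p q + dist2 q u.
Proof.
rewrite !dist2E; apply: le_trans (enormD _ _); apply: enorm_le_coordwise => j.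
rewrite !mxE; case: j => [[|[|//]] _] /=.
  by rewrite !ger0_norm ?addr_ge0 ?enorm_ge0 ?dist1_triangle.
by rewrite !ger0_norm ?addr_ge0 ?enorm_ge0 ?dist1_triangle.
Qed.

Definition rat_box n : set P2 :=
  if @unpickle (nat * nat)%type n is Some (k, l) then rat_ball k `*` rat_ball l else set0.

Lemma measurable_rat_box n : measurable (rat_box n).
Proof.
rewrite /rat_box; case: unpickle => [[k l]|]; last exact: measurable0.
by apply: measurableX; exact: measurable_rat_ball.
Qed.

Lemma rat_box_dense p r : 0 < r ->
  exists n, rat_box n p /\ rat_box n `<=` [set u | dist2 p u < r].
Proof.
move=> r_gt0; have r2_gt0 : 0 < r / 2 by rewrite divr_gt0.
have [k [pk subk]] := rat_ball_dense p.1 r2_gt0.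
have [l [pl subl]] := rat_ball_dense p.2 r2_gt0.
exists (pickle (k, l)); rewrite /rat_box pickleK; split => // u [/subk /= uk /subl /= ul].
by have := dist2_le p u; lra.
Qed.

Lemma supp2_meets (m : Meas2 R d) C :
  measurable C -> (0 < m C)%E -> exists2 p, C p & supp (@dist2 R d) m p.
Proof. exact: (supp_meets dist2_triangle measurable_rat_box rat_box_dense). Qed.

Lemma measurable_ball2 p r : measurable [set u | dist2 p u < r].
Proof. exact: (measurable_ball dist2_triangle measurable_rat_box rat_box_dense). Qed.

End EuclideanSupport.

Section BallsAndCubes.
Variables (R : realType) (d : nat).
Local Notation P := (pt R d).

Definition cball0 (r : R) : set P := [set x | enorm (vec x) <= r].

Lemma eball0_sub_cball0 r : eball0 r `<=` cball0 r.
Proof. by move=> x /ltW. Qed.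

Lemma cball0_sub r r' : (0 <= r -> r <= r') -> cball0 r `<=` cball0 r'.
Proof. by move=> le_r x xr; apply: le_trans xr (le_r (le_trans (enorm_ge0 _) xr)). Qed.

Lemma cball0_sub_eball0 r r' : (0 <= r -> r < r') -> cball0 r `<=` eball0 r'.
Proof. by move=> lt_r x xr; apply: le_lt_trans xr (lt_r (le_trans (enorm_ge0 _) xr)). Qed.

Lemma cball0_closed r x :
  (forall e, 0 < e -> exists2 y, dist1 x y < e & cball0 r y) -> cball0 r x.
Proof.
move=> near; apply/ler_addgt0Pr => e /near[y xy yr].
by have := enorm_le_addB (vec x) (vec y); rewrite /cball0 /dist1 /= in xy yr *; lra.
Qed.

Lemma eq_supp1 (m1 m2 : set P -> \bar R) :
  (forall A, measurable A -> m1 A = m2 A) -> supp (@dist1 R d) m1 = supp (@dist1 R d) m2.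
Proof.
move=> m12; apply/seteqP; split=> x mx r r_gt0; have := mx r r_gt0;
  by rewrite m12 //; exact: measurable_ball1.
Qed.

Lemma eopen_halfspace j b : eopen [set y : P | vec y ord0 j < b].
Proof.
move=> x /= xb; exists (b - vec x ord0 j); first by rewrite subr_gt0.
move=> y /= xy; have := coord_le_enorm (y - x) j; rewrite !mxE.
by have := ler_norm (y ord0 j - x ord0 j); rewrite /vec in xb *; lra.
Qed.

Lemma measurable_cube (a : 'rV[R]_d) e : measurable (cube a e).
Proof.
pose slab j := [set y : P | vec y ord0 j < a ord0 j + e] `\` [set y | vec y ord0 j < a ord0 j].
rewrite (_ : cube a e = \bigcap_(j in [set: 'I_d]) slab j).
  apply: fin_bigcap_measurable => [|j _]; first exact: finite_finset.
  by apply: measurableD; apply: measurable_eopen; exact: eopen_halfspace.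
apply/seteqP; split=> y /= ya j.
  by move=> _; have /andP[ya1 ya2] := ya j; split=> //=; apply/negP; rewrite -leNgt.
by have [/= ya2 /negP] := ya j I; rewrite -leNgt => ya1; apply/andP.
Qed.

Lemma cube_corner_le (a : 'rV[R]_d) e (y : P) :
  0 < e -> cube a e y -> enorm a <= enorm (vec y) + d.+1%:R * e.
Proof.
move=> e_gt0 ya; apply: le_trans (enorm_le_addB a (vec y)) _; rewrite lerD2l ltW //.
apply: enorm_lt_box => // j; rewrite !mxE; have /andP[] := ya j.
by rewrite ltr_norml; lra.
Qed.

End BallsAndCubes.

Lemma sume_gt0_ex (R : realType) (I : finType) (F : I -> \bar R) :
  (0 < \sum_i F i)%E -> exists i, (0 < F i)%E.
Proof.
move=> F_gt0; apply: contrapT => noF; move: F_gt0; apply/negP; rewrite -leNgt.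
by apply: sume_le0 => i _; rewrite leNgt; apply/negP => Fi; apply: noF; exists i.
Qed.

Lemma mule_dirac_gt0 (R : realType) (dd : measure_display) (T : measurableType dd)
    (a : \bar R) (p : T) (A : set T) :
  (0 < a * \d_p A)%E -> (0 < a)%E /\ A p.
Proof.
rewrite diracE; have [/set_mem pA|_] := boolP (p \in A); first by rewrite mule1.
by rewrite mule0 ltxx.
Qed.

Section VelocityField.
Variables (R : realType) (d : nat).
Local Notation P := (pt R d).
Variables (V : Meas R d -> Meas2 R d) (C_S : R) (C_F : R -> R).
Hypothesis hV : condV V C_S C_F.

Lemma supp_marginal mu q : supp (@dist2 R d) (V mu) q -> supp (@dist1 R d) mu q.1.
Proof.
move=> Vq r r_gt0; have [Vmarg _ _] := hV.
rewrite -Vmarg; last exact: measurable_ball1.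
apply: lt_le_trans (Vq r r_gt0) _; apply: le_measure; rewrite ?inE.
- exact: measurable_ball2.
- by apply: measurableX => //; exact: measurable_ball1.
- by move=> u /= qu; split => //; apply: le_lt_trans (dist1_le_dist2 q u) qu.
Qed.

Lemma condV_CS_ge0 : 0 <= C_S.
Proof.
have [Vmarg V1 _] := hV; pose mu : Meas R d := \d_(0 : P).
have [q _ Vq] : exists2 q, setT q & supp (@dist2 R d) (V mu) q.
  apply: supp2_meets; first exact: measurableT.
  by rewrite -setXTT Vmarg // /mu /= diracT lte01.
have := V1 mu; set Sv := ereal_sup _; set Sx := ereal_sup _ => VSx.
have Sv_ge : ((enorm (vec q.2))%:E <= Sv)%E by apply: ereal_sup_ubound; exists q.
have Sx_ge : ((enorm (vec q.1))%:E <= Sx)%E by apply: ereal_sup_ubound; exists q.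
have := le_trans Sv_ge VSx; rewrite leNgt; apply: contraNle => CS_lt0.
case: Sx Sx_ge {VSx} => [x| |] //= q1x.
  rewrite -EFinD -EFinM lte_fin; rewrite lee_fin in q1x.
  by have := enorm_ge0 (vec q.1); have := enorm_ge0 (vec q.2); nra.
by rewrite addey // mulry ltr0_sg // mulN1e ltNyr.
Qed.

Lemma supp_velocity_le (mu : Meas R d) r q : supp (@dist1 R d) mu `<=` cball0 r ->
  supp (@dist2 R d) (V mu) q -> enorm (vec q.2) <= C_S * (1 + r).
Proof.
move=> mu_r Vq; have [_ V1 _] := hV.
have := V1 mu; set Sv := ereal_sup _; set Sx := ereal_sup _ => VSx.
have Sv_ge : ((enorm (vec q.2))%:E <= Sv)%E by apply: ereal_sup_ubound; exists q.
have Sx_ge : ((enorm (vec q.1))%:E <= Sx)%E by apply: ereal_sup_ubound; exists q.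
have Sx_le : (Sx <= r%:E)%E.
  by apply: ge_ereal_sup => _ [p Vp <-]; rewrite lee_fin; exact: mu_r _ (supp_marginal Vp).
have := le_trans Sv_ge VSx; case: Sx Sx_ge Sx_le {VSx} => [x| |] //= _.
rewrite -EFinD -EFinM !lee_fin => xr /le_trans; apply.
by rewrite ler_wpM2l ?condV_CS_ge0 ?lerD2l.
Qed.

End VelocityField.

Section LatticeSupport.
Variables (R : realType) (N d : nat).
Local Notation P := (pt R d).
Local Notation h := (N%:R^-1 : R).
Local Notation D := (d.+1%:R : R).
Hypothesis N_gt0 : (0 < N)%N.

Let h_gt0 : 0 < h. Proof. by rewrite invr_gt0 ltr0n. Qed.

Let xcell_gt0 : 0 < (N%:R ^+ 2)^-1 :> R.
Proof. by rewrite invr_gt0 exprn_gt0 // ltr0n. Qed.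

Lemma enorm_xnode_le (m : Meas R d) r (i : xidx N d) :
  supp (@dist1 R d) m `<=` cball0 r -> (0 < m (Qx i))%E ->
  enorm (xnode R i) <= r + D * h ^+ 2.
Proof.
move=> m_r mi; have [y Qy my] := supp1_meets (measurable_cube _ _) mi.
apply: le_trans (cube_corner_le xcell_gt0 Qy) _; rewrite -exprVn.
by rewrite lerD2r; exact: m_r.
Qed.

Lemma supp_discretize (m : Meas R d) r :
  supp (@dist1 R d) m `<=` cball0 r ->
  supp (@dist1 R d) (discretize N m) `<=` cball0 (r + D * h ^+ 2).
Proof.
move=> m_r x mx; apply: cball0_closed => e /mx /sume_gt0_ex[i /mule_dirac_gt0[mi xi]].
by exists (ofvec (xnode R i)) => //; exact: enorm_xnode_le m_r mi.
Qed.

Variables (V : Meas R d -> Meas2 R d) (s : Meas R d -> Meas R d) (c : P -> Meas R d -> R).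
Variables (C_S : R) (C_F : R -> R) (L Rs : R).
Hypotheses (hV : condV V C_S C_F) (hS : condS s L Rs).

Lemma enorm_transport_node_le (mu : Meas R d) r tau (i : xidx N d) (j : vidx N d) :
  supp (@dist1 R d) mu `<=` cball0 r -> 0 <= tau <= h ->
  (0 < V mu (Qx i `*` Qv j))%E ->
  enorm (xnode R i + tau *: vnode R j) <= r + h * (C_S * (1 + r)) + 2 * D * h ^+ 2.
Proof.
move=> mu_r /andP[tau0 tauh] Vij.
have [q [Qq1 Qq2] Vq] := supp2_meets (measurableX (measurable_cube _ _) (measurable_cube _ _)) Vij.
have q1_r : enorm (vec q.1) <= r := mu_r _ (supp_marginal hV Vq).
have q2_r := supp_velocity_le hV mu_r Vq.
have := cube_corner_le xcell_gt0 Qq1; rewrite -exprVn => xi.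
have vj := cube_corner_le h_gt0 Qq2.
have tau_vj : tau * enorm (vnode R j) <= h * (C_S * (1 + r) + D * h).
  by apply: ler_pM => //; [exact: enorm_ge0 | lra].
apply: le_trans (enormD _ _) _; rewrite enormZ ger0_norm //; lra.
Qed.

Lemma lattice_step_atoms (mu : Meas R d) tau x e : 0 <= tau ->
  supp (@dist1 R d) (lattice_step N V s c mu tau) x -> 0 < e ->
  (exists2 i : xidx N d, (0 < s mu (Qx i))%E & dist1 x (ofvec (xnode R i)) < e) \/
  (exists (i : xidx N d) (j : vidx N d), (0 < V mu (Qx i `*` Qv j))%E /\
               dist1 x (ofvec (xnode R i + tau *: vnode R j)) < e).
Proof.
move=> tau0 sx e_gt0; have := sx e e_gt0; rewrite /lattice_step.
set S1 := (\sum_(i : xidx N d) _)%E; set S2 := (\sum_(i : xidx N d) _)%E => S_gt0.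
have [S1_le0|S1_gt0] := leP S1 0%E; last first.
  by left; have [i /mule_dirac_gt0[si xi]] := sume_gt0_ex S1_gt0; exists i.
right; have S2_gt0 : (0 < S2)%E.
  by apply: lt_le_trans S_gt0 _; apply: geeDr; apply: mule_ge0_le0.
have [i /sume_gt0_ex[j /mule_dirac_gt0[+ xij]]] := sume_gt0_ex S2_gt0.
by rewrite pmule_lgt0 ?lte_fin ?expR_gt0 // => Vij; exists i, j.
Qed.

Lemma supp_lattice_step (mu : Meas R d) r tau : 0 <= tau <= h ->
  supp (@dist1 R d) mu `<=` cball0 r ->
  supp (@dist1 R d) (lattice_step N V s c mu tau)
    `<=` cball0 (Num.max (Rs + D * h ^+ 2) (r + h * (C_S * (1 + r)) + 2 * D * h ^+ 2)).
Proof.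
move=> htau mu_r x sx; apply: cball0_closed => e.
case/andP: (htau) => tau0 _; case/(lattice_step_atoms tau0 sx) => [[i si xi]|[i [j [Vij xij]]]].
  exists (ofvec (xnode R i)) => //; rewrite /cball0 /= le_max; apply/orP; left.
  by apply: enorm_xnode_le si; apply: subset_trans (hS.2 mu) _; exact: eball0_sub_cball0.
exists (ofvec (xnode R i + tau *: vnode R j)) => //; rewrite /cball0 /= le_max.
by apply/orP; right; exact: enorm_transport_node_le mu_r htau Vij.
Qed.

End LatticeSupport.

(* A closed-form supersolution of the one-step recursion of supp_lattice_step,
   r |-> max (a + D h^2) (r + h C (1 + r) + 2 D h^2), started below Rt + 2 D h^2. *)
Definition lattice_radius (R : realType) (C Rt D h : R) (k : nat) : R :=
  (1 + Rt + 2 * D * h ^+ 2 * k.+1%:R) * (1 + C * h) ^+ k - 1.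

Lemma lattice_radius_grow (R : realType) (C Rt D h : R) k : 0 <= C -> 0 <= D -> 0 < h ->
  lattice_radius C Rt D h k + h * (C * (1 + lattice_radius C Rt D h k)) + 2 * D * h ^+ 2
  <= lattice_radius C Rt D h k.+1.
Proof.
move=> C_ge0 D_ge0 h_gt0.
have P_ge1 : 1 <= (1 + C * h) ^+ k.+1 by rewrite exprn_ege1 // lerDl mulr_ge0 // ltW.
have := ler_wpM2l (mulr_ge0 D_ge0 (sqr_ge0 h)) P_ge1; rewrite mulr1.
rewrite /lattice_radius -[k.+2%:R]natr1 [(1 + C * h) ^+ k.+1]exprSr.
by set P := (1 + C * h) ^+ k; lra.
Qed.

Lemma lattice_radius_ge (R : realType) (C Rt D h : R) k a : 0 <= C -> 0 <= D -> 0 < h ->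
  a <= Rt -> 0 <= a + D * h ^+ 2 -> a + D * h ^+ 2 <= lattice_radius C Rt D h k.
Proof.
move=> C_ge0 D_ge0 h_gt0 a_Rt a_ge0; rewrite /lattice_radius lerBrDr.
have P_ge1 : 1 <= (1 + C * h) ^+ k by rewrite exprn_ege1 // lerDl mulr_ge0 // ltW.
have Dh_ge0 : 0 <= D * h ^+ 2 by rewrite mulr_ge0 ?sqr_ge0.
have Dk : D * h ^+ 2 <= D * h ^+ 2 * k.+1%:R by rewrite ler_peMr // ler1n.
have X_ge0 : 0 <= 1 + Rt + 2 * D * h ^+ 2 * k.+1%:R by lra.
by apply: le_trans (ler_peMr _ _) => //; lra.
Qed.

Lemma lattice_radius_lt (R : realType) (C Rt D h T A : R) l : 0 <= C -> 0 <= D -> 0 < h ->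
  h * l%:R <= T -> Rt <= A -> 0 <= A ->
  h * (1 + 2 * D * (T + 2) + C * (A + 2)) < 1 ->
  0 <= lattice_radius C Rt D h l.+1 ->
  lattice_radius C Rt D h l.+1 < expR (C * T) * (Rt + 2) - 1.
Proof.
move=> C_ge0 D_ge0 h_gt0 hl Rt_A A_ge0 small.
have Ch_ge0 : 0 <= C * h by rewrite mulr_ge0 // ltW.
have T_ge0 : 0 <= T by apply: le_trans _ hl; exact: mulr_ge0 (ltW h_gt0) (ler0n _ _).
have [h_le1 eps_lt1] : h <= 1 /\ h * (2 * D * (T + 2) + C * (A + 2)) < 1.
  have : 0 <= h * (2 * D * (T + 2) + C * (A + 2)).
    by rewrite mulr_ge0 ?(ltW h_gt0) // addr_ge0 ?mulr_ge0 ?addr_ge0.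
  by move: small; rewrite -addrA mulrDr mulr1; split; lra.
have P_ge1 : 1 <= (1 + C * h) ^+ l.+1 by rewrite exprn_ege1 // lerDl.
have P_le : (1 + C * h) ^+ l.+1 <= expR (C * T) * (1 + C * h).
  rewrite exprSr ler_wpM2r ?addr_ge0 //; apply: (@le_trans _ _ (expR (C * h) ^+ l)).
    by apply: lerXn2r; rewrite ?nnegrE ?expR_ge0 ?addr_ge0 // expR_ge1Dx.
  by rewrite -expRM_natl ler_expR mulrCA ler_wpM2l // mulrC.
have delta : 2 * D * h ^+ 2 * l.+2%:R <= 2 * D * h * (T + 2).
  have hl2 : h * l%:R + 2 * h <= T + 2 by lra.
  have := ler_wpM2l (mulr_ge0 (mulr_ge0 (ler0n R 2) D_ge0) (ltW h_gt0)) hl2.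
  by rewrite -[l.+2%:R]natr1 -[l.+1%:R]natr1 expr2; lra.
rewrite /lattice_radius; move: P_ge1 P_le delta.
move: ((1 + C * h) ^+ l.+1) (2 * D * h ^+ 2 * l.+2%:R) => P e P_ge1 P_le e_le XP_ge1.
have X_gt0 : 0 < 1 + Rt + e.
  rewrite ltNge; apply/negP => X_le0.
  by have := mulr_le0_ge0 X_le0 (le_trans ler01 P_ge1); lra.
have key : (1 + Rt + e) * (1 + C * h) < Rt + 2.
  have CA_ge0 : 0 <= C * h * (A + 2) by rewrite mulr_ge0 ?addr_ge0.
  have : C * h * (1 + Rt + e) <= C * h * (A + 2) by rewrite ler_wpM2l //; lra.
  lra.
have := ler_wpM2l (ltW X_gt0) P_le.
have : expR (C * T) * ((1 + Rt + e) * (1 + C * h)) < expR (C * T) * (Rt + 2).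
  by rewrite ltr_pM2l ?expR_gt0.
lra.
Qed.

Lemma cball0_max_sub (R : realType) (d : nat) (x y z : R) :
  (0 <= x -> x <= z) -> (0 <= y -> y <= z) -> @cball0 R d (Num.max x y) `<=` @cball0 R d z.
Proof. by move=> xz yz; apply: cball0_sub; rewrite /Order.max; case: ifP. Qed.

Lemma cball0_lattice_radius_step (R : realType) (d : nat) (C Rt h a : R) k :
  0 <= C -> 0 < h -> a <= Rt ->
  @cball0 R d (Num.max (a + d.+1%:R * h ^+ 2)
    (lattice_radius C Rt d.+1%:R h k + h * (C * (1 + lattice_radius C Rt d.+1%:R h k))
     + 2 * d.+1%:R * h ^+ 2))
  `<=` cball0 (lattice_radius C Rt d.+1%:R h k.+1).
Proof.
move=> C_ge0 h_gt0 a_Rt; apply: cball0_max_sub => [a_ge0|_].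
  exact: lattice_radius_ge.
exact: lattice_radius_grow.
Qed.

Lemma lattice_time_le (R : realType) (T : R) N l : 0 <= T -> (0 < N)%N ->
  (l <= Msteps T N)%N -> N%:R^-1 * l%:R <= T.
Proof.
move=> T_ge0 N_gt0 lM; rewrite mulrC ler_pdivrMr ?ltr0n //.
apply: le_trans (_ : (Msteps T N)%:R <= T * N%:R); first by rewrite ler_nat.
by rewrite /Msteps natr_absz ger0_norm ?floor_le // floor_ge0 mulr_ge0.
Qed.

Lemma archi_bound_mesh (R : realType) (K : R) N : 0 <= K -> (Num.bound K <= N)%N ->
  (0 < N)%N /\ N%:R^-1 * K < 1.
Proof.
move=> K_ge0 KN; have {KN} KN : K < N%:R.
  by apply: lt_le_trans (archi_boundP K_ge0) _; rewrite ler_nat.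
have N_gt0 : (0 < N)%N by rewrite -(ltr0n R); apply: le_lt_trans KN.
by split=> //; rewrite mulrC ltr_pdivrMr ?ltr0n // mul1r.
Qed.

Theorem lemma4p3 (R : realType) (d : nat) (T : R)
  (V : Meas R d -> Meas2 R d) (s : Meas R d -> Meas R d)
  (c : pt R d -> Meas R d -> R)
  (C_S : R) (C_F : R -> R) (L Rs C_b C_L : R)
  (mu0 : Meas R d) (R0 : R) :
  0 < T ->
  condV V C_S C_F ->
  condS s L Rs ->
  condC c C_b C_L ->
  supp (@dist1 R d) mu0 `<=` @eball0 R d R0 ->
  exists N0 : nat, forall N : nat, (N0 <= N)%N ->
    forall nu : nat -> Meas R d,
      (forall A : set (pt R d), measurable A -> nu 0%N A = discretize N mu0 A) ->
      (forall (l : nat) (A : set (pt R d)), (l < Msteps T N)%N -> measurable A ->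
         nu l.+1 A = lattice_step N V s c (nu l) (N%:R)^-1 A) ->
      forall l : nat, (l <= Msteps T N)%N ->
      forall tau : R, 0 <= tau <= (N%:R)^-1 ->
        supp (@dist1 R d) (lattice_step N V s c (nu l) tau)
          `<=` @eball0 R d (expR (C_S * T) * (Num.max Rs R0 + 2) - 1).
Proof.
move=> T_gt0 hV hS _ mu0_R0.
set Rt := Num.max Rs R0.
have [Rs_Rt R0_Rt] : Rs <= Rt /\ R0 <= Rt by rewrite !le_max !lexx orbT.
have CS_ge0 := condV_CS_ge0 hV.
set K := 1 + 2 * d.+1%:R * (T + 2) + C_S * (`|Rt| + 2).
have K_ge0 : 0 <= K by rewrite !addr_ge0 ?mulr_ge0 ?addr_ge0 // ltW.
exists (Num.bound K) => N /(archi_bound_mesh K_ge0)[N_gt0 small] nu nu0 nu_step l lM tau htau.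
have h_gt0 : 0 < N%:R^-1 :> R by rewrite invr_gt0 ltr0n.
pose rho := lattice_radius C_S Rt d.+1%:R N%:R^-1.
have step k : supp (@dist1 R d) (nu k) `<=` cball0 (rho k) -> forall t, 0 <= t <= N%:R^-1 ->
    supp (@dist1 R d) (lattice_step N V s c (nu k) t) `<=` cball0 (rho k.+1).
  move=> nu_k t ht; apply: subset_trans (supp_lattice_step N_gt0 hV hS ht nu_k) _.
  exact: (cball0_lattice_radius_step (k := k) CS_ge0 h_gt0 Rs_Rt).
have supp_nu k : (k <= Msteps T N)%N -> supp (@dist1 R d) (nu k) `<=` cball0 (rho k).
  elim: k => [_|k IH kM].
    rewrite (eq_supp1 nu0).
    apply: subset_trans (supp_discretize N_gt0 (subset_trans mu0_R0 (@eball0_sub_cball0 _ _ _))) _.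
    by apply: cball0_sub => R0_ge0; apply: lattice_radius_ge.
  rewrite (eq_supp1 (nu_step k ^~ kM)); apply: step; first exact/IH/ltnW.
  by rewrite lexx ltW.
apply: subset_trans (step l (supp_nu l lM) tau htau) (cball0_sub_eball0 _).
apply: (lattice_radius_lt (A := `|Rt|)); rewrite ?normr_ge0 ?ler_norm //.
exact: lattice_time_le (ltW T_gt0) N_gt0 lM.
Qed.
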